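(* For all positive integers $n,m$ with $m$ even, there is a deterministic query algorithm which, given an index $j\in[m]$ and query access to an input $x\in\Sigma^M$, makes $\tilde O(n+m)$ queries and accepts if and only if column $j$ is good for $x$, i.e., $g_{n,m}(x)=1$ and $j$ belongs to the set $G$ of condition (4') for $x$.
   Context: Let $n,m$ be positive integers with $m$ even, $M=[n]\times[m]$ (a grid of cells with $n$ rows and $m$ columns), $\tilde M = M\cup\{\bot\}$ (pointers to cells, $\bot$ is the null pointer). Let $T$ be the following fixed binary tree with $m$ leaves and $m-1$ internal nodes: if $m=2^k$, $T$ is the complete binary tree with $2^k$ leaves; if $2^k<m<2^{k+1}$, take the complete binary tree with $2^k$ leaves and add a pair of children to each of its $m-2^k$ leftmost leaves. Outgoing arcs of internal nodes are labeled 'left' and 'right', leaves are labeled $1,\dots,m$ from left to right, and $T(j)$ is the sequence of 'left'/'right' labels on the root-to-leaf-$j$ path. The input alphabet is $\Sigma=\{0,1\}\times\tilde M\times\tilde M\times\tilde M$; for $v\in\Sigma$ its components are $\mathrm{val}(v),\mathrm{lpoint}(v),\mathrm{rpoint}(v),\mathrm{bpoint}(v)$. The function $g_{n,m}\colon\Sigma^M\to\{0,1\}$ is defined by $g_{n,m}(x)=1$ iff: (1) there is exactly one column $b\in[m]$ with $\mathrm{val}(x_{i,b})=1$ for all $i\in[n]$ (the marked column); (2) in column $b$ there is a unique cell $a$ with $x_a\ne(1,\bot,\bot,\bot)$ (the special element); (3) for each column $j\in[m]\setminus\{b\}$, the path starting at $a$ and following $\mathrm{lpoint},\mathrm{rpoint}$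 as specified by $T(j)$ exists (no pointer on it is $\bot$) and ends in a cell $\ell_j$ in column $j$ with $\mathrm{val}(x_{\ell_j})=0$; (4') the set $G=\{j\in[m]\setminus\{b\} : \mathrm{bpoint}(x_{\ell_j})=a\}$ has size exactly $m/2$. A query returns the symbol $x_c\in\Sigma$ of one cell $c\in M$. $\tilde O$ hides factors polylogarithmic in $n,m$. *)

From mathcomp Require Import all_boot.
Set Implicit Arguments. Unset Strict Implicit. Unset Printing Implicit Defensive.

(* Rows [n] are 'I_n and columns [m] are 'I_m (0-indexed: column j here is
   column j+1 of the paper). A pointer in M~ = M ∪ {⊥} is an option cell,
   with None = ⊥. *)
Definition cell (n m : nat) := ('I_n * 'I_m)%type.
Definition ptr (n m : nat) := option (cell n m).
Definition Sigma (n m : nat) := (bool * ptr n m * ptr n m * ptr n m)%type.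

Definition valS {n m} (v : Sigma n m) : bool := v.1.1.1.
Definition lpoint {n m} (v : Sigma n m) : ptr n m := v.1.1.2.
Definition rpoint {n m} (v : Sigma n m) : ptr n m := v.1.2.
Definition bpoint {n m} (v : Sigma n m) : ptr n m := v.2.

Definition trivial_sym {n m} : Sigma n m := (true, None, None, None).

Definition input (n m : nat) := cell n m -> Sigma n m.

Inductive btree := BLeaf | BNode of btree & btree.

Fixpoint complete_tree (k : nat) : btree :=
  if k is k'.+1 then BNode (complete_tree k') (complete_tree k') else BLeaf.

(* add a pair of children to each of the r leftmost leaves (at most all
   leaves); returns the new tree and the number of splits not yet done *)
Fixpoint split_left (r : nat) (t : btree) : btree * nat :=
  match t with
  | BLeaf => if r is r'.+1 then (BNode BLeaf BLeaf, r') else (BLeaf, 0)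
  | BNode l rt =>
      let (l', r1) := split_left r l in
      let (rt', r2) := split_left r1 rt in (BNode l' rt', r2)
  end.

(* root-to-leaf label sequences, leaves listed left to right;
   false = 'left', true = 'right' *)
Fixpoint leaf_paths (t : btree) : seq (seq bool) :=
  match t with
  | BLeaf => [:: [::]]
  | BNode l r => map (cons false) (leaf_paths l) ++ map (cons true) (leaf_paths r)
  end.

(* T for m leaves: k = floor(log2 m), i.e. 2^k <= m < 2^(k+1) *)
Definition Ttree (m : nat) : btree :=
  let k := trunc_log 2 m in (split_left (m - 2 ^ k) (complete_tree k)).1.

(* T(j) for the leaf with (0-indexed) label j *)
Definition Tpath (m : nat) (j : nat) : seq bool := nth [::] (leaf_paths (Ttree m)) j.

Fixpoint follow {n m} (x : input n m) (a : cell n m) (p : seq bool) : ptr n m :=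
  match p with
  | [::] => Some a
  | b :: p' =>
      match (if b then rpoint (x a) else lpoint (x a)) with
      | None => None
      | Some c => follow x c p'
      end
  end.

Definition marked {n m} (x : input n m) (b : 'I_m) : Prop :=
  forall i : 'I_n, valS (x (i, b)) = true.

Definition Gset {n m} (x : input n m) (b : 'I_m) (a : cell n m) : {set 'I_m} :=
  [set j : 'I_m | (j != b) &&
     (match follow x a (Tpath m j) with
      | Some l => bpoint (x l) == Some a
      | None => false
      end)].

(* conditions (1),(2),(3),(4') with witnesses b (marked column) and a (special element) *)
Definition g_conds {n m} (x : input n m) (b : 'I_m) (a : cell n m) : Prop :=
  [/\ (forall b' : 'I_m, marked x b' <-> b' = b),
      a.2 = b /\ x a <> trivial_sym /\
        (forall i : 'I_n, x (i, b) <> trivial_sym -> i = a.1),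
      (forall j : 'I_m, j <> b ->
         exists l : cell n m, follow x a (Tpath m j) = Some l /\
                              l.2 = j /\ valS (x l) = false)
    & #|Gset x b a| = m %/ 2].

Definition g_is_one {n m} (x : input n m) : Prop :=
  exists (b : 'I_m) (a : cell n m), g_conds x b a.

Definition good_column {n m} (x : input n m) (j : 'I_m) : Prop :=
  exists (b : 'I_m) (a : cell n m), g_conds x b a /\ j \in Gset x b a.

Inductive qtree (Q A : Type) :=
  | QLeaf of bool
  | QNode of Q & (A -> qtree Q A).
Arguments QLeaf {Q A}.
Arguments QNode {Q A}.

Fixpoint qrun {Q A} (t : qtree Q A) (x : Q -> A) : bool :=
  match t with
  | QLeaf b => b
  | QNode q k => qrun (k (x q)) x
  end.

Fixpoint qcost {Q A} (t : qtree Q A) (x : Q -> A) : nat :=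
  match t with
  | QLeaf _ => 0
  | QNode q k => (qcost (k (x q)) x).+1
  end.

From mathcomp Require Import all_boot zify.
Set Implicit Arguments. Unset Strict Implicit. Unset Printing Implicit Defensive.

(* If column j is good, with special element a, then the T(j)-path from a
   ends at a cell of column j whose bpoint is a, so a occurs among the
   bpoints of column j. Scanning column j while keeping a single candidate,
   and replacing it by the winner of a duel against each new bpoint, ends
   with a: a duel costs O(log m) queries (one T-path and one endpoint) and a
   special element wins every duel. It then remains to verify conditions
   (1)-(4') and j \in G for this one candidate, which costs O(n + m log m)
   queries. *)

Inductive prog (Q A R : Type) : Type :=
  | Ret of R
  | Ask of Q & (A -> prog Q A R).
Arguments Ret {Q A R}.
Arguments Ask {Q A R}.

Section Programs.

Variables Q A : Type.

Fixpoint bindp R S (p : prog Q A R) (f : R -> prog Q A S) : prog Q A S :=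
  match p with
  | Ret r => f r
  | Ask q k => Ask q (fun a => bindp (k a) f)
  end.

Fixpoint runp R (p : prog Q A R) (x : Q -> A) : R :=
  match p with
  | Ret r => r
  | Ask q k => runp (k (x q)) x
  end.

Fixpoint costp R (p : prog Q A R) (x : Q -> A) : nat :=
  match p with
  | Ret _ => 0
  | Ask q k => (costp (k (x q)) x).+1
  end.

Fixpoint qtree_of_prog (p : prog Q A bool) : qtree Q A :=
  match p with
  | Ret b => QLeaf b
  | Ask q k => QNode q (fun a => qtree_of_prog (k a))
  end.

Fixpoint mapp R T (f : T -> prog Q A R) (s : seq T) : prog Q A (seq R) :=
  if s is t :: s' then
    bindp (f t) (fun r => bindp (mapp f s') (fun rs => Ret (r :: rs)))
  else Ret [::].

Fixpoint foldp S T (f : S -> T -> prog Q A S) (s0 : S) (s : seq T) : prog Q A S :=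
  if s is t :: s' then bindp (f s0 t) (fun s1 => foldp f s1 s') else Ret s0.

Variable x : Q -> A.

Lemma runp_bind R S (p : prog Q A R) (f : R -> prog Q A S) :
  runp (bindp p f) x = runp (f (runp p x)) x.
Proof. by elim: p => //= q k IH; rewrite IH. Qed.

Lemma costp_bind R S (p : prog Q A R) (f : R -> prog Q A S) :
  costp (bindp p f) x = costp p x + costp (f (runp p x)) x.
Proof. by elim: p => //= q k IH; rewrite IH. Qed.

Lemma qrun_qtree_of_prog p : qrun (qtree_of_prog p) x = runp p x.
Proof. by elim: p => //= q k IH. Qed.

Lemma qcost_qtree_of_prog p : qcost (qtree_of_prog p) x = costp p x.
Proof. by elim: p => //= q k ->. Qed.

Lemma runp_map R T (f : T -> prog Q A R) (g : T -> R) s :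
  (forall t, runp (f t) x = g t) -> runp (mapp f s) x = map g s.
Proof. by move=> fg; elim: s => //= t s IH; rewrite !runp_bind /= IH fg. Qed.

Lemma costp_map R T (f : T -> prog Q A R) s K :
  (forall t, costp (f t) x <= K) -> costp (mapp f s) x <= K * size s.
Proof.
move=> fK; elim: s => //= t s IH.
by rewrite !costp_bind /= addn0 mulnS leq_add.
Qed.

Lemma runp_fold S T (f : S -> T -> prog Q A S) (g : S -> T -> S) s0 s :
  (forall st t, runp (f st t) x = g st t) -> runp (foldp f s0 s) x = foldl g s0 s.
Proof. by move=> fg; elim: s s0 => //= t s IH s0; rewrite runp_bind fg IH. Qed.

Lemma costp_fold S T (f : S -> T -> prog Q A S) s0 s K :
  (forall st t, costp (f st t) x <= K) -> costp (foldp f s0 s) x <= K * size s.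
Proof.
move=> fK; elim: s s0 => //= t s IH s0.
by rewrite costp_bind mulnS leq_add.
Qed.

End Programs.

Fixpoint height (t : btree) : nat :=
  if t is BNode l r then (maxn (height l) (height r)).+1 else 0.

Lemma size_leaf_paths t p : p \in leaf_paths t -> size p <= height t.
Proof.
elim: t p => [|l IHl r IHr] p /=; first by rewrite inE => /eqP ->.
rewrite mem_cat => /orP[] /mapP[q q_in ->] /=; rewrite ltnS.
  exact: leq_trans (IHl _ q_in) (leq_maxl _ _).
exact: leq_trans (IHr _ q_in) (leq_maxr _ _).
Qed.

Lemma height_split_left r t : height (split_left r t).1 <= (height t).+1.
Proof.
elim: t r => [|l IHl rt IHr] r /=; first by case: r.
have := IHl r; case: (split_left r l) => l' r1 /= hl.
have := IHr r1; case: (split_left r1 rt) => rt' r2 /= hr.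
rewrite ltnS geq_max (leq_trans hl) ?(leq_trans hr) //.
  by rewrite ltnS leq_maxr.
by rewrite ltnS leq_maxl.
Qed.

Lemma height_complete_tree k : height (complete_tree k) = k.
Proof. by elim: k => //= k ->; rewrite maxnn. Qed.

Lemma size_Tpath m j : size (Tpath m j) <= (trunc_log 2 m).+1.
Proof.
rewrite /Tpath; set s := leaf_paths _.
have [j_lt|j_ge] := ltnP j (size s); last by rewrite nth_default.
apply: leq_trans (size_leaf_paths (mem_nth [::] j_lt)) _.
by rewrite /Ttree (leq_trans (height_split_left _ _)) ?height_complete_tree.
Qed.

Section Algorithm.

Variables n m : nat.
Notation cell := (cell n m).
Notation Sigma := (Sigma n m).
Notation P := (prog cell Sigma).

Fixpoint followP (a : cell) (p : seq bool) : P (ptr n m) :=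
  if p is b :: p' then
    Ask a (fun v => if (if b then rpoint v else lpoint v) is Some c
                    then followP c p' else Ret None)
  else Ret (Some a).

Definition at_leaf (x : input n m) (f : cell -> Sigma -> bool) a p :=
  if follow x a p is Some l then f l (x l) else false.

Definition at_leafP (f : cell -> Sigma -> bool) a p : P bool :=
  bindp (followP a p)
        (fun r => if r is Some l then Ask l (fun v => Ret (f l v)) else Ret false).

Definition zero_in (j : 'I_m) (l : cell) (v : Sigma) := (l.2 == j) && ~~ valS v.

Definition reaches_zero x a j := at_leaf x (zero_in j) a (Tpath m j).

Definition points_to (a l : cell) (v : Sigma) := bpoint v == Some a.

Definition points_back x a j := at_leaf x (points_to a) a (Tpath m j).

Definition special (x : input n m) (a : cell) := g_conds x a.2 a.

(* A special element wins every duel: its own column consists of ones only,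
   and from it every other column is reached at a zero. *)
Definition duel x (c a' : cell) :=
  if c.2 == a'.2 then (if x c == trivial_sym then a' else c)
  else if reaches_zero x c a'.2 then c else a'.

Definition step x (j : 'I_m) (st : option cell) (i : 'I_n) :=
  if bpoint (x (i, j)) is Some a' then
    Some (if st is Some c then duel x c a' else a')
  else st.

Definition champion x j := foldl (step x j) None (enum 'I_n).

Definition column_ok (a : cell) (i : 'I_n) (v : Sigma) :=
  valS v && ((v != trivial_sym) ==> (i == a.1)).

Definition cond3 x a j := (j == a.2) || reaches_zero x a j.

Definition inG x a j := (j != a.2) && points_back x a j.

Definition verify x a j :=
  [&& x a != trivial_sym, all (fun i => column_ok a i (x (i, a.2))) (enum 'I_n),
      all (cond3 x a) (enum 'I_m), count (inG x a) (enum 'I_m) == m %/ 2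
    & inG x a j].

Definition duelP (c a' : cell) : P cell :=
  if c.2 == a'.2 then Ask c (fun v => Ret (if v == trivial_sym then a' else c))
  else bindp (at_leafP (zero_in a'.2) c (Tpath m a'.2))
             (fun z => Ret (if z then c else a')).

Definition stepP (j : 'I_m) (st : option cell) (i : 'I_n) : P (option cell) :=
  Ask (i, j) (fun v =>
    if bpoint v is Some a' then
      if st is Some c then bindp (duelP c a') (fun w => Ret (Some w))
      else Ret (Some a')
    else Ret st).

Definition cond3P (a : cell) (j : 'I_m) : P bool :=
  bindp (at_leafP (zero_in j) a (Tpath m j)) (fun z => Ret ((j == a.2) || z)).

Definition inGP (a : cell) (j : 'I_m) : P bool :=
  bindp (at_leafP (points_to a) a (Tpath m j)) (fun z => Ret ((j != a.2) && z)).

Definition verifyP (a : cell) (j : 'I_m) : P bool :=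
  Ask a (fun va =>
  bindp (mapp (fun i => Ask (i, a.2) (fun v => Ret (column_ok a i v))) (enum 'I_n))
    (fun cols =>
  bindp (mapp (cond3P a) (enum 'I_m)) (fun c3s =>
  bindp (mapp (inGP a) (enum 'I_m)) (fun gs =>
  Ret [&& va != trivial_sym, all id cols, all id c3s, count id gs == m %/ 2
        & nth false gs j])))).

Definition decideP (j : 'I_m) : P bool :=
  bindp (foldp (stepP j) None (enum 'I_n))
        (fun st => if st is Some a then verifyP a j else Ret false).

Variable x : input n m.

Notation L := (trunc_log 2 m).

Lemma runp_followP a p : runp (followP a p) x = follow x a p.
Proof.
elim: p a => //= b p IH a.
by case: b; [case: (rpoint (x a)) | case: (lpoint (x a))].
Qed.

Lemma costp_followP a p : costp (followP a p) x <= size p.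
Proof.
elim: p a => //= b p IH a.
by case: b; [case: (rpoint (x a)) | case: (lpoint (x a))].
Qed.

Lemma runp_at_leafP f a p : runp (at_leafP f a p) x = at_leaf x f a p.
Proof. by rewrite runp_bind runp_followP /at_leaf; case: follow. Qed.

Lemma costp_at_leafP f a j : costp (at_leafP f a (Tpath m j)) x <= L.+2.
Proof.
rewrite costp_bind runp_followP.
have hp := leq_trans (costp_followP a _) (size_Tpath m j).
by case: follow => [l|] /=; rewrite ?addn0 ?addn1 ?ltnS // ltnW.
Qed.

Lemma runp_duelP c a' : runp (duelP c a') x = duel x c a'.
Proof.
by rewrite /duelP /duel; case: eqP => //; rewrite runp_bind runp_at_leafP.
Qed.

Lemma costp_duelP c a' : costp (duelP c a') x <= L.+2.
Proof.
rewrite /duelP; case: eqP => // _.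
by rewrite costp_bind addn0 costp_at_leafP.
Qed.

Lemma runp_stepP j st i : runp (stepP j st i) x = step x j st i.
Proof.
rewrite /stepP /step /=; case: bpoint => // a'; case: st => // c.
by rewrite runp_bind runp_duelP.
Qed.

Lemma costp_stepP j st i : costp (stepP j st i) x <= L.+3.
Proof.
rewrite /stepP /=; case: bpoint => // a'; case: st => // c.
by rewrite costp_bind addn0 ltnS costp_duelP.
Qed.

Lemma runp_cond3P a j : runp (cond3P a j) x = cond3 x a j.
Proof. by rewrite runp_bind runp_at_leafP. Qed.

Lemma costp_cond3P a j : costp (cond3P a j) x <= L.+2.
Proof. by rewrite costp_bind /= addn0 costp_at_leafP. Qed.

Lemma runp_inGP a j : runp (inGP a j) x = inG x a j.
Proof. by rewrite runp_bind runp_at_leafP. Qed.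

Lemma costp_inGP a j : costp (inGP a j) x <= L.+2.
Proof. by rewrite costp_bind /= addn0 costp_at_leafP. Qed.

Lemma runp_verifyP a j : runp (verifyP a j) x = verify x a j.
Proof.
rewrite /verifyP /= !runp_bind /=.
rewrite (runp_map _ (g := fun i => column_ok a i (x (i, a.2)))) //.
rewrite (runp_map _ (runp_cond3P a)) (runp_map _ (runp_inGP a)).
rewrite !all_map count_map (nth_map j) ?size_enum_ord // nth_ord_enum.
by rewrite /verify !enumT.
Qed.

Lemma costp_verifyP a j : costp (verifyP a j) x <= (n + 2 * (L.+2 * m)).+1.
Proof.
have tests (t : 'I_m -> P bool) :
    (forall j', costp (t j') x <= L.+2) -> costp (mapp t (enum 'I_m)) x <= L.+2 * m.
  by move=> tL; apply: leq_trans (costp_map _ tL) _; rewrite size_enum_ord.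
have cols : costp (mapp (fun i => Ask (i, a.2) (fun v => Ret (column_ok a i v)))
                        (enum 'I_n)) x <= n.
  by rewrite -[leqRHS]mul1n -[n in leqRHS](size_enum_ord n) costp_map.
rewrite /verifyP /= !costp_bind /= addn0 ltnS mul2n -addnn.
by rewrite !leq_add ?tests // => j'; [exact: costp_cond3P | exact: costp_inGP].
Qed.

Lemma runp_champion j :
  runp (foldp (stepP j) None (enum 'I_n)) x = champion x j.
Proof. exact: runp_fold (runp_stepP j). Qed.

Lemma mem_Gset a j : (j \in Gset x a.2 a) = inG x a j.
Proof. by rewrite /Gset inE. Qed.

Lemma card_Gset a : #|Gset x a.2 a| = count (inG x a) (enum 'I_m).
Proof.
by rewrite enumT cardE /enum_mem size_filter; apply: eq_count => j; rewrite -mem_Gset.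
Qed.

Lemma verify_sound a j : verify x a j -> special x a /\ j \in Gset x a.2 a.
Proof.
case/and5P=> /eqP a_nt /allP col /allP c3 /eqP cnt jG.
split; last by rewrite mem_Gset.
split=> [b'|||].
- split=> [b'_marked|->]; last by move=> i; have /andP[] := col i (mem_enum _ _).
  apply/eqP/negPn/negP => b'a.
  have := c3 b' (mem_enum _ _); rewrite /cond3 (negbTE b'a) /reaches_zero /at_leaf.
  by case: follow => // -[l1 l2] /andP[/eqP /= ->]; rewrite b'_marked.
- do 2!split=> //; move=> i x_nt; have /andP[_ /implyP] := col i (mem_enum _ _).
  by move/(_ (introN eqP x_nt))/eqP.
- move=> j' /eqP j'a; have := c3 j' (mem_enum _ _).
  rewrite /cond3 /reaches_zero /at_leaf (negbTE j'a) /=.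
  by case: follow => // l /andP[/eqP l2 /negbTE]; exists l.
- by rewrite card_Gset.
Qed.

Lemma verify_complete a j : special x a -> j \in Gset x a.2 a -> verify x a j.
Proof.
case=> [marked [_ [a_nt col_uniq]] c3 cnt] jG.
apply/and5P; split.
- exact/eqP.
- apply/allP => i _; rewrite /column_ok (proj2 (marked a.2)) //=.
  by apply/implyP => /eqP/col_uniq ->.
- apply/allP => j' _; rewrite /cond3; case: eqP => //= /c3[l [fl [l2 lv]]].
  by rewrite /reaches_zero /at_leaf fl /zero_in l2 lv eqxx.
- by rewrite -card_Gset cnt.
- by rewrite -mem_Gset.
Qed.

Lemma duel_special_l c a' : special x c -> duel x c a' = c.
Proof.
case=> [_ [_ [c_nt _]] c3 _]; rewrite /duel; case: eqP => [_|ca'].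
  by case: eqP.
have [l [fl [l2 lv]]] := c3 a'.2 (nesym ca').
by rewrite /reaches_zero /at_leaf fl /zero_in l2 lv eqxx.
Qed.

Lemma duel_special_r c a' : special x a' -> duel x c a' = a'.
Proof.
case=> [marked [_ [_ col_uniq]] _ _]; rewrite /duel.
case: c => c1 c2 /=; case: eqP => [c2a|_].
  case: eqP => // c_nt; subst c2.
  by rewrite (col_uniq _ c_nt) -surjective_pairing.
rewrite /reaches_zero /at_leaf; case: follow => // -[l1 l2].
by rewrite /zero_in /=; case: eqP => //= ->; rewrite (proj2 (marked a'.2)).
Qed.

Lemma foldl_step_special j a i0 s st :
  special x a -> bpoint (x (i0, j)) = Some a -> st = Some a \/ i0 \in s ->
  foldl (step x j) st s = Some a.
Proof.
move=> sa bp; elim: s st => [|i s IH] st; first by case.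
move=> hst /=; apply: IH; rewrite in_cons in hst.
have [->|ii0] := eqVneq i i0.
  by left; rewrite /step bp; case: st {hst} => // c; rewrite duel_special_r.
case: hst => [->|/orP[/eqP ii0'|]]; last by right.
- by left; rewrite /step; case: bpoint => // a'; rewrite duel_special_l.
- by rewrite ii0' eqxx in ii0.
Qed.

Lemma champion_special j b a :
  g_conds x b a -> j \in Gset x b a -> champion x j = Some a.
Proof.
move=> g jG; have [_ [ab _] c3 _] := g; subst b.
move: jG; rewrite mem_Gset => /andP[/eqP ja].
have [l [fl [l2 _]]] := c3 j ja; rewrite /points_back /at_leaf fl => /eqP bp.
apply: (foldl_step_special (i0 := l.1)) => //; last by right; rewrite mem_enum.
by rewrite -l2 -surjective_pairing.
Qed.

Lemma runp_decideP j : runp (decideP j) x <-> good_column x j.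
Proof.
rewrite /decideP runp_bind runp_champion.
case ch: (champion x j) => [c|]; last first.
  by split=> // -[b [a [g jG]]]; rewrite (champion_special g jG) in ch.
rewrite runp_verifyP; split=> [/verify_sound[sc cG]|[b [a [g jG]]]].
  by exists c.2, c.
rewrite (champion_special g jG) in ch; case: ch => <-.
by have [_ [ab _] _ _] := g; subst b; apply: verify_complete.
Qed.

Lemma costp_decideP j : costp (decideP j) x <= L.+3 * n + (n + 2 * (L.+2 * m)).+1.
Proof.
rewrite /decideP costp_bind leq_add //.
  by rewrite (leq_trans (costp_fold (K := L.+3) _ _ _)) ?size_enum_ord // => st i;
    apply: costp_stepP.
by case: (runp (foldp _ _ _) x) => [a|] //; apply: costp_verifyP.
Qed.

End Algorithm.

Theorem lemma13 :
  exists C d : nat, forall n m : nat, 0 < n -> 0 < m -> ~~ odd m ->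
    exists alg : 'I_m -> qtree (cell n m) (Sigma n m),
      forall (j : 'I_m) (x : input n m),
        (qrun (alg j) x = true <-> good_column x j) /\
        qcost (alg j) x <= C * (n + m) * (trunc_log 2 (n + m)).+1 ^ d.
Proof.
exists 10, 1 => n m n_gt0 m_gt0 _.
exists (fun j => qtree_of_prog (@decideP n m j)) => j x.
rewrite qrun_qtree_of_prog qcost_qtree_of_prog; split; first exact: runp_decideP.
have logm : trunc_log 2 m <= trunc_log 2 (n + m) by rewrite leq_trunc_log ?leq_addl.
move: (costp_decideP x j) logm; rewrite expn1.
set L := trunc_log 2 m; set L' := trunc_log 2 (n + m); set c := costp _ x.
nia.
Qed.
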